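(* Let $\varphi(s,v)=\vec c(s)+v\vec q(s)$ be a developable timelike ruled surface of type $M^1_-$ in $\mathbb{R}^3_1$ and let the timelike ruled surface $\varphi^*(s,v)=\vec c(s)+R\vec a(s)+v\vec q^*(s)$ of type $M^1_+$ or $M^1_-$ be a Mannheim offset of $\varphi$, with $\theta$ the angle between $\vec q$ and $\vec q^*$. Let $\varphi_{h^*}$ and $\varphi_{a^*}$ be the trajectory ruled surfaces generated by $\vec h^*$ and $\vec a^*$. Then (a) $\varphi_{h^*}$ is nondevelopable; (b) $\varphi_{a^*}$ is developable if and only if $\sinh\theta+R\frac{ds_1}{ds}\kappa\cosh\theta=0$ when $\varphi^*$ is of type $M^1_+$, respectively $\cosh\theta+R\frac{ds_1}{ds}\kappa\sinh\theta=0$ when $\varphi^*$ is of type $M^1_-$.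
   Context: Work in Minkowski 3-space $\mathbb{R}^3_1$ with $\langle x,y\rangle=-x_1y_1+x_2y_2+x_3y_3$, $\|x\|=\sqrt{|\langle x,x\rangle|}$, and Lorentzian cross product $x\times y=(x_2y_3-x_3y_2,\,x_1y_3-x_3y_1,\,x_2y_1-x_1y_2)$. A ruled surface is $\varphi(s,v)=\vec c(s)+v\vec q(s)$ with $\vec q$ a unit non-null vector field, $\langle\vec q,\vec q\rangle=\varepsilon_2\in\{\pm1\}$, $d\vec q/ds$ non-null, $\vec c$ the striction curve ($\langle d\vec q/ds,d\vec c/ds\rangle=0$) and $s$ the arc length of $\vec c$. Its Frenet frame $\{\vec q,\vec h,\vec a\}$ has central normal $\vec h=\frac{d\vec q/ds}{\|d\vec q/ds\|}$ and asymptotic normal $\vec a=\frac{(d\vec q/ds)\times\vec q}{\|d\vec q/ds\|}$. Type $M^1_-$: $\vec q$ timelike, $\vec h$ spacelike; type $M^1_+$: $\vec q$, $\vec h$ spacelike. Let $s_1$ be the arc length of the spherical image of $\vec q$ and $\kappa$ the conical curvature of the directing cone, so that for these types $d\vec q/ds_1=\vec h$, $d\vec h/ds_1=-\varepsilon_2\vec q+\kappa\vec a$, $d\vec a/ds_1=\varepsilon_2\kappa\vec h$. A ruled surface $\psi(s,v)=\vec b(s)+v\vec e(s)$ has distribution parameter $\det(d\vec b/ds,\vec e,d\vec e/ds)/\langle d\vec e/ds,d\vec e/ds\rangle$ and is developable iff it vanishes identically. A ruled surface $\varphi^*(s,v)=\vec c^*(s)+v\vec q^*(s)$ with Frenet frame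 $\{\vec q^*,\vec h^*,\vec a^*\}$ is a Mannheim offset of $\varphi$ if its rulings correspond one-to-one with those of $\varphi$ and $\vec h^*=\vec a$; then $\vec c^*=\vec c+R\vec a$ with $R$ constant since $\varphi$ is developable. With $\theta$ the angle between $\vec q$ and $\vec q^*$: if $\varphi^*$ is of type $M^1_+$, $\vec q^*=\sinh\theta\,\vec q+\cosh\theta\,\vec h$, $\vec a^*=\cosh\theta\,\vec q+\sinh\theta\,\vec h$; if of type $M^1_-$, $\vec q^*=\cosh\theta\,\vec q+\sinh\theta\,\vec h$, $\vec a^*=\sinh\theta\,\vec q+\cosh\theta\,\vec h$. The trajectory ruled surfaces are $\varphi_{h^*}(s,v)=\vec c^*(s)+v\vec h^*(s)$ and $\varphi_{a^*}(s,v)=\vec c^*(s)+v\vec a^*(s)$. *)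

From Stdlib Require Import Reals.
From Coquelicot Require Import Coquelicot.
Open Scope R_scope.

Record V3 := mkV { x1 : R; x2 : R; x3 : R }.

Definition vadd (u v : V3) : V3 := mkV (x1 u + x1 v) (x2 u + x2 v) (x3 u + x3 v).
Definition vscale (k : R) (u : V3) : V3 := mkV (k * x1 u) (k * x2 u) (k * x3 u).

Definition lor (u v : V3) : R := - x1 u * x1 v + x2 u * x2 v + x3 u * x3 v.
Definition lnorm (u : V3) : R := sqrt (Rabs (lor u u)).
Definition lcross (u v : V3) : V3 :=
  mkV (x2 u * x3 v - x3 u * x2 v)
      (x1 u * x3 v - x3 u * x1 v)
      (x2 u * x1 v - x1 u * x2 v).
Definition det3 (u v w : V3) : R :=
    x1 u * (x2 v * x3 w - x3 v * x2 w)
  - x2 u * (x1 v * x3 w - x3 v * x1 w)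
  + x3 u * (x1 v * x2 w - x2 v * x1 w).

Definition vdiff_at (f : R -> V3) (s : R) : Prop :=
  ex_derive (fun t => x1 (f t)) s /\ ex_derive (fun t => x2 (f t)) s /\
  ex_derive (fun t => x3 (f t)) s.
Definition vD (f : R -> V3) (s : R) : V3 :=
  mkV (Derive (fun t => x1 (f t)) s) (Derive (fun t => x2 (f t)) s)
      (Derive (fun t => x3 (f t)) s).

Definition inI (lo hi s : R) : Prop := lo < s < hi.

Definition hvec (q : R -> V3) (s : R) : V3 := vscale (/ lnorm (vD q s)) (vD q s).
Definition avec (q : R -> V3) (s : R) : V3 :=
  vscale (/ lnorm (vD q s)) (lcross (vD q s) (q s)).

(** distribution parameter of psi(s,v) = b(s) + v e(s) *)
Definition distparam (b e : R -> V3) (s : R) : R :=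
  det3 (vD b s) (e s) (vD e s) / lor (vD e s) (vD e s).
Definition developable_on (lo hi : R) (b e : R -> V3) : Prop :=
  forall s, inI lo hi s -> distparam b e s = 0.

Inductive Mtype := Mplus | Mminus.

Definition qstar (t : Mtype) (th : R -> R) (q h : R -> V3) (s : R) : V3 :=
  match t with
  | Mplus  => vadd (vscale (sinh (th s)) (q s)) (vscale (cosh (th s)) (h s))
  | Mminus => vadd (vscale (cosh (th s)) (q s)) (vscale (sinh (th s)) (h s))
  end.
Definition astar (t : Mtype) (th : R -> R) (q h : R -> V3) (s : R) : V3 :=
  match t with
  | Mplus  => vadd (vscale (cosh (th s)) (q s)) (vscale (sinh (th s)) (h s))
  | Mminus => vadd (vscale (sinh (th s)) (q s)) (vscale (cosh (th s)) (h s))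
  end.
Definition cstar (c : R -> V3) (Rc : R) (a : R -> V3) (s : R) : V3 :=
  vadd (c s) (vscale Rc (a s)).

(** the developability criterion of Corollary 5.4(b); ds1/ds = ||dq/ds|| *)
Definition crit (t : Mtype) (th : R -> R) (Rc : R) (ds1 kap : R -> R) (s : R) : R :=
  match t with
  | Mplus  => sinh (th s) + Rc * ds1 s * kap s * cosh (th s)
  | Mminus => cosh (th s) + Rc * ds1 s * kap s * sinh (th s)
  end.

(** The Mannheim condition [h* = a] pins down the derivative of the offset
    ruling: writing [q* = f q + g h] (with [(f, g) = (sinh θ, cosh θ)] or
    [(cosh θ, sinh θ)]), the Frenet formulas give
    [q*' = (f' + n g) q + (n f + g') h + n g κ a] with [n = ds1/ds], so
    [h* = a] forces [f' = -n g], [g' = -n f] and [κ ≠ 0].  Since [a* = g q + f h]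
    is [q*] with the roles of [f] and [g] exchanged, the same relations give
    [a*' = n f κ a].  As [c' = q] and [a' = -n κ h], both distribution
    parameters are determinants in the frame [{q, h, a}]: the one of [φ_{h*}]
    is a nonzero multiple of [det(q, h, a)], and the one of [φ_{a*}] is
    [n f κ (f + R n κ g) det(q, h, a)] over a nonzero denominator. *)
From Pilot Require Import Defs.
From Stdlib Require Import Reals Lra.
From Coquelicot Require Import Coquelicot.
Open Scope R_scope.

Lemma Rdiv_eq0_iff (a b : R) : b <> 0 -> (a / b = 0 <-> a = 0).
Proof.
  intros Hb; split; intros H.
  - apply Rmult_integral in H as [H | H]; [exact H|].
    exfalso; exact (Rinv_neq_0_compat b Hb H).
  - rewrite H; apply Rdiv_0_l.
Qed.

Lemma V3_ext (u v : V3) : x1 u = x1 v -> x2 u = x2 v -> x3 u = x3 v -> u = v.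
Proof. destruct u, v; simpl; intros -> -> ->; reflexivity. Qed.

Lemma lor_vscale (k : R) (u : V3) : lor (vscale k u) (vscale k u) = k * k * lor u u.
Proof. destruct u; unfold lor, vscale; simpl; ring. Qed.

Lemma det3_combination_eq0 (u v w : V3) (al be ga : R) :
  det3 u v w <> 0 ->
  vadd (vadd (vscale al u) (vscale be v)) (vscale ga w) = mkV 0 0 0 ->
  al = 0 /\ be = 0 /\ ga = 0.
Proof.
  intros HD Hc.
  set (z := vadd (vadd (vscale al u) (vscale be v)) (vscale ga w)) in Hc.
  assert (Hal : al * det3 u v w = det3 z v w)
    by (destruct u, v, w; unfold z, det3, vadd, vscale; simpl; ring).
  assert (Hbe : be * det3 u v w = det3 u z w)
    by (destruct u, v, w; unfold z, det3, vadd, vscale; simpl; ring).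
  assert (Hga : ga * det3 u v w = det3 u v z)
    by (destruct u, v, w; unfold z, det3, vadd, vscale; simpl; ring).
  assert (Hz : forall x y, det3 z x y = 0 /\ det3 x z y = 0 /\ det3 x y z = 0)
    by (intros x y; rewrite Hc; unfold det3; simpl; repeat split; ring).
  destruct (Hz v w) as [Z1 _], (Hz u w) as [_ [Z2 _]], (Hz u v) as [_ [_ Z3]].
  rewrite Z1 in Hal; rewrite Z2 in Hbe; rewrite Z3 in Hga.
  apply Rmult_integral in Hal as [Hal | ]; [|contradiction].
  apply Rmult_integral in Hbe as [Hbe | ]; [|contradiction].
  apply Rmult_integral in Hga as [Hga | ]; [|contradiction].
  auto.
Qed.

Lemma vscale_combination_eq_third (u v w : V3) (al be ga m : R) :
  det3 u v w <> 0 ->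
  vscale (/ m) (vadd (vadd (vscale al u) (vscale be v)) (vscale ga w)) = w ->
  al = 0 /\ be = 0 /\ ga <> 0.
Proof.
  intros HD Hw.
  assert (Hm : m <> 0).
  { intros ->; apply HD; rewrite <- Hw, Rinv_0.
    destruct u, v, w; unfold det3, vadd, vscale; simpl; ring. }
  assert (Hc : vadd (vadd (vscale al u) (vscale be v)) (vscale (ga - m) w) = mkV 0 0 0).
  { destruct u, v, w; unfold vadd, vscale in *; simpl in *.
    injection Hw as W1 W2 W3.
    apply (f_equal (Rmult m)) in W1, W2, W3.
    rewrite <- !Rmult_assoc, !Rinv_r, !Rmult_1_l in W1, W2, W3 by exact Hm.
    apply V3_ext; simpl; lra. }
  destruct (det3_combination_eq0 u v w al be (ga - m) HD Hc) as [Hal [Hbe Hga]].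
  repeat split; [exact Hal | exact Hbe | lra].
Qed.

(** With [u] unit timelike and [p] spacelike the bracket below is positive:
    this is why [{q, h, a}] is a frame. *)
Lemma det3_cross_frame (u p : V3) (k : R) :
  det3 u (vscale k p) (vscale k (lcross p u)) =
  k * k * (lor p u ^ 2 - lor p p * lor u u).
Proof. destruct u, p; unfold det3, lor, lcross, vscale; simpl; ring. Qed.

Lemma det3_shear_swap (u v w : V3) (r m : R) :
  det3 (vadd u (vscale r (vscale m v))) w (vscale m v) = - m * det3 u v w.
Proof. destruct u, v, w; unfold det3, vadd, vscale; simpl; ring. Qed.

Lemma det3_shear_span (u v w : V3) (r m A B e : R) :
  det3 (vadd u (vscale r (vscale m v))) (vadd (vscale A u) (vscale B v)) (vscale e w)
  = e * (B - r * m * A) * det3 u v w.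
Proof. destruct u, v, w; unfold det3, vadd, vscale; simpl; ring. Qed.

Definition vcomb (f g : R -> R) (u w : R -> V3) (s : R) : V3 :=
  vadd (vscale (f s) (u s)) (vscale (g s) (w s)).

Lemma vD_vcomb (f g : R -> R) (u w : R -> V3) (s : R) :
  ex_derive f s -> ex_derive g s -> vdiff_at u s -> vdiff_at w s ->
  vD (vcomb f g u w) s =
  vadd (vadd (vscale (Derive f s) (u s)) (vscale (f s) (vD u s)))
       (vadd (vscale (Derive g s) (w s)) (vscale (g s) (vD w s))).
Proof.
  intros Hf Hg [U1 [U2 U3]] [W1 [W2 W3]].
  unfold vD, vcomb; simpl.
  rewrite (Derive_plus (fun t => f t * x1 (u t)) (fun t => g t * x1 (w t))),
          (Derive_plus (fun t => f t * x2 (u t)) (fun t => g t * x2 (w t))),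
          (Derive_plus (fun t => f t * x3 (u t)) (fun t => g t * x3 (w t)))
    by (apply ex_derive_mult; assumption).
  rewrite !Derive_mult by assumption.
  reflexivity.
Qed.

Lemma vD_cstar (c a : R -> V3) (Rc s : R) :
  vdiff_at c s -> vdiff_at a s ->
  vD (cstar c Rc a) s = vadd (vD c s) (vscale Rc (vD a s)).
Proof.
  intros [C1 [C2 C3]] [A1 [A2 A3]].
  unfold vD, cstar; simpl.
  rewrite (Derive_plus (fun t => x1 (c t)) (fun t => Rc * x1 (a t))),
          (Derive_plus (fun t => x2 (c t)) (fun t => Rc * x2 (a t))),
          (Derive_plus (fun t => x3 (c t)) (fun t => Rc * x3 (a t)))
    by (assumption || (apply ex_derive_scal; assumption)).
  rewrite !Derive_scal.
  reflexivity.
Qed.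

Lemma ex_derive_sinh_comp (th : R -> R) (s : R) :
  ex_derive th s -> ex_derive (fun t => sinh (th t)) s.
Proof.
  intros H; apply (ex_derive_comp sinh th); [|exact H].
  exists (cosh (th s)); apply is_derive_Reals, derivable_pt_lim_sinh.
Qed.

Lemma ex_derive_cosh_comp (th : R -> R) (s : R) :
  ex_derive th s -> ex_derive (fun t => cosh (th t)) s.
Proof.
  intros H; apply (ex_derive_comp cosh th); [|exact H].
  exists (sinh (th s)); apply is_derive_Reals, derivable_pt_lim_cosh.
Qed.

Definition qcoef (t : Mtype) (th : R -> R) (s : R) : R :=
  match t with Defs.Mplus => sinh (th s) | Defs.Mminus => cosh (th s) end.
Definition hcoef (t : Mtype) (th : R -> R) (s : R) : R :=
  match t with Defs.Mplus => cosh (th s) | Defs.Mminus => sinh (th s) end.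

Lemma qstar_vcomb (t : Mtype) (th : R -> R) (q h : R -> V3) :
  qstar t th q h = vcomb (qcoef t th) (hcoef t th) q h.
Proof. destruct t; reflexivity. Qed.

Lemma astar_vcomb (t : Mtype) (th : R -> R) (q h : R -> V3) :
  astar t th q h = vcomb (hcoef t th) (qcoef t th) q h.
Proof. destruct t; reflexivity. Qed.

Lemma crit_coef (t : Mtype) (th : R -> R) (Rc : R) (ds1 kap : R -> R) (s : R) :
  crit t th Rc ds1 kap s = qcoef t th s + Rc * ds1 s * kap s * hcoef t th s.
Proof. destruct t; reflexivity. Qed.

Lemma ex_derive_coef (t : Mtype) (th : R -> R) (s : R) :
  ex_derive th s -> ex_derive (qcoef t th) s /\ ex_derive (hcoef t th) s.
Proof.
  intros H; pose proof (ex_derive_sinh_comp th s H);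
    pose proof (ex_derive_cosh_comp th s H).
  destruct t; split; assumption.
Qed.

Section FrenetFrame.

Variables (c q : R -> V3) (kap : R -> R) (Rc s : R).
Local Notation n := (lnorm (vD q s)).

Hypothesis q_timelike : lor (q s) (q s) = -1.
Hypothesis dq_spacelike : lor (vD q s) (vD q s) > 0.

Lemma lnorm_vD_gt0 : 0 < n.
Proof.
  unfold lnorm; rewrite Rabs_pos_eq by lra.
  apply sqrt_lt_R0; lra.
Qed.

Lemma vD_q_hvec : vD q s = vscale n (hvec q s).
Proof.
  pose proof lnorm_vD_gt0.
  unfold hvec; destruct (vD q s); apply V3_ext; simpl; field; lra.
Qed.

Lemma lor_hvec_gt0 : 0 < lor (hvec q s) (hvec q s).
Proof.
  pose proof lnorm_vD_gt0.
  unfold hvec; rewrite lor_vscale.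
  apply Rmult_lt_0_compat; [|lra].
  apply Rmult_lt_0_compat; apply Rinv_0_lt_compat; lra.
Qed.

Lemma det3_frame_neq0 : det3 (q s) (hvec q s) (avec q s) <> 0.
Proof.
  pose proof lnorm_vD_gt0 as Hn.
  unfold hvec, avec; rewrite det3_cross_frame, q_timelike.
  apply Rmult_integral_contrapositive_currified; [|nra].
  assert (/ n <> 0) by (apply Rinv_neq_0_compat; lra).
  apply Rmult_integral_contrapositive_currified; assumption.
Qed.

Hypothesis q_diff : vdiff_at q s.
Hypothesis h_diff : vdiff_at (hvec q) s.
Hypothesis frenet_h :
  vD (hvec q) s = vscale n (vadd (q s) (vscale (kap s) (avec q s))).

Lemma vD_vcomb_frame (f g : R -> R) :
  ex_derive f s -> ex_derive g s ->
  vD (vcomb f g q (hvec q)) s =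
  vadd (vadd (vscale (Derive f s + n * g s) (q s))
             (vscale (n * f s + Derive g s) (hvec q s)))
       (vscale (n * g s * kap s) (avec q s)).
Proof.
  intros Hf Hg.
  pose proof vD_q_hvec as Hdq; pose proof frenet_h as Hdh.
  rewrite vD_vcomb by assumption.
  set (m := lnorm (vD q s)) in *; rewrite Hdq, Hdh.
  destruct (q s), (hvec q s), (avec q s); apply V3_ext; simpl; ring.
Qed.

Lemma mannheim_frenet (f g : R -> R) :
  ex_derive f s -> ex_derive g s ->
  hvec (vcomb f g q (hvec q)) s = avec q s ->
  kap s <> 0 /\
  vD (vcomb g f q (hvec q)) s = vscale (n * f s * kap s) (avec q s).
Proof.
  intros Hf Hg HM.
  unfold hvec at 1 in HM; rewrite vD_vcomb_frame in HM by assumption.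
  destruct (vscale_combination_eq_third _ _ _ _ _ _ _ det3_frame_neq0 HM)
    as [Hq [Hh Ha]].
  split.
  - intros Hk; apply Ha; rewrite Hk; ring.
  - rewrite vD_vcomb_frame by assumption.
    rewrite Rplus_comm in Hq; rewrite Rplus_comm in Hh; rewrite Hq, Hh.
    destruct (q s), (hvec q s), (avec q s); apply V3_ext; simpl; ring.
Qed.

Hypothesis c_diff : vdiff_at c s.
Hypothesis a_diff : vdiff_at (avec q) s.
Hypothesis dc_q : vD c s = q s.
Hypothesis frenet_a : vD (avec q) s = vscale (- n * kap s) (hvec q s).

Lemma vD_cstar_frame :
  vD (cstar c Rc (avec q)) s = vadd (q s) (vscale Rc (vscale (- n * kap s) (hvec q s))).
Proof. rewrite vD_cstar, dc_q, frenet_a by assumption; reflexivity. Qed.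

Lemma distparam_hstar_neq0 :
  kap s <> 0 -> distparam (cstar c Rc (avec q)) (avec q) s <> 0.
Proof.
  intros Hk.
  pose proof lnorm_vD_gt0; pose proof lor_hvec_gt0.
  assert (Hnk : - n * kap s <> 0)
    by (apply Rmult_integral_contrapositive_currified; lra).
  unfold distparam; rewrite vD_cstar_frame, frenet_a, det3_shear_swap, lor_vscale.
  rewrite Rdiv_eq0_iff.
  - apply Rmult_integral_contrapositive_currified;
      [lra | exact det3_frame_neq0].
  - apply Rmult_integral_contrapositive_currified; [|lra].
    apply Rmult_integral_contrapositive_currified; exact Hnk.
Qed.

Lemma distparam_astar_eq0_iff (f g : R -> R) :
  vD (vcomb g f q (hvec q)) s = vscale (n * f s * kap s) (avec q s) ->
  lor (vD (vcomb g f q (hvec q)) s) (vD (vcomb g f q (hvec q)) s) <> 0 ->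
  distparam (cstar c Rc (avec q)) (vcomb g f q (hvec q)) s = 0 <->
  f s + Rc * n * kap s * g s = 0.
Proof.
  intros Hda Hden.
  assert (Hw : n * f s * kap s <> 0)
    by (intros Hw; apply Hden; rewrite Hda, Hw, lor_vscale; ring).
  unfold distparam; rewrite (Rdiv_eq0_iff _ _ Hden).
  rewrite vD_cstar_frame, Hda; unfold vcomb; rewrite det3_shear_span.
  pose proof det3_frame_neq0 as HD.
  split; intros H.
  - apply Rmult_integral in H as [H | H]; [|contradiction].
    apply Rmult_integral in H as [H | H]; [contradiction | lra].
  - replace (f s - Rc * (- n * kap s) * g s) with 0 by lra; ring.
Qed.

End FrenetFrame.

Theorem corollary5p4
  (lo hi : R) (c q : R -> V3) (kap th : R -> R) (Rc : R) (t : Mtype) :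
  lo < hi ->
  (forall s, inI lo hi s ->
     vdiff_at c s /\ vdiff_at q s /\ vdiff_at (hvec q) s /\
     vdiff_at (avec q) s /\ ex_derive th s) ->
  (forall s, inI lo hi s -> lor (q s) (q s) = -1) ->
  (forall s, inI lo hi s -> lor (vD q s) (vD q s) > 0) ->
  (forall s, inI lo hi s -> lor (vD q s) (vD c s) = 0) ->
  (forall s, inI lo hi s -> Rabs (lor (vD c s) (vD c s)) = 1) ->
  developable_on lo hi c q ->
  (forall s, inI lo hi s -> vD c s = q s) ->
  (forall s, inI lo hi s ->
     vD (hvec q) s = vscale (lnorm (vD q s))
                       (vadd (q s) (vscale (kap s) (avec q s)))) ->
  (forall s, inI lo hi s ->
     vD (avec q) s = vscale (- lnorm (vD q s) * kap s) (hvec q s)) ->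
  (forall s, inI lo hi s ->
     hvec (qstar t th q (hvec q)) s = avec q s) ->
  ~ developable_on lo hi (cstar c Rc (avec q)) (avec q)
  /\
  ((forall s, inI lo hi s ->
      lor (vD (astar t th q (hvec q)) s) (vD (astar t th q (hvec q)) s) <> 0) ->
   (developable_on lo hi (cstar c Rc (avec q)) (astar t th q (hvec q)) <->
    forall s, inI lo hi s ->
      crit t th Rc (fun s => lnorm (vD q s)) kap s = 0)).
Proof.
  (* Striction, arc length and developability of [φ] all follow from [c' = q]. *)
  intros Hlt Hreg Hq Hp _ _ _ Hdc Hh Ha HM.
  assert (Hoffset : forall s, inI lo hi s -> kap s <> 0 /\
    vD (astar t th q (hvec q)) s = vscale (lnorm (vD q s) * qcoef t th s * kap s) (avec q s)).
  { intros s Hs; destruct (Hreg s Hs) as [_ [Dq [Dh [_ Dth]]]].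
    destruct (ex_derive_coef t th s Dth).
    rewrite astar_vcomb; apply mannheim_frenet; auto.
    rewrite <- qstar_vcomb; auto. }
  split.
  - set (s0 := (lo + hi) / 2).
    assert (Hs0 : inI lo hi s0) by (unfold inI, s0; lra).
    destruct (Hreg s0 Hs0) as [Dc [_ [_ [Da _]]]].
    intros Hdev; apply (distparam_hstar_neq0 c q kap Rc s0); auto.
    apply Hoffset, Hs0.
  - intros Hden.
    assert (Hpt : forall s, inI lo hi s ->
      distparam (cstar c Rc (avec q)) (astar t th q (hvec q)) s = 0 <->
      crit t th Rc (fun s => lnorm (vD q s)) kap s = 0).
    { intros s Hs; destruct (Hreg s Hs) as [Dc [_ [_ [Da _]]]].
      pose proof (Hden s Hs) as Hden_s; pose proof (proj2 (Hoffset s Hs)) as Hda.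
      rewrite astar_vcomb in Hden_s, Hda |- *; rewrite crit_coef.
      apply distparam_astar_eq0_iff; auto. }
    split; intros H s Hs; apply Hpt; auto.
Qed.
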